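(* Let $N\ge 6$ with $N\equiv 2\pmod 4$. Then for every $k$ with $1\le k<N/4$, $$\mathrm{scale}_{N/2}[k]=\mathrm{scale}_N[2k]\,\frac{\mathrm{GenScale}[N/2]}{\mathrm{GenScale}[N]}.$$ Consequently $\mathrm{scale}_N[N/2-2]=\mathrm{GenScale}[N/2]$.
   Context: For an integer $n\ge3$ and $1\le k<n/2$, $\mathrm{scale}_n[k]=\tan(\pi/n)/\tan(k\pi/n)$. $\langle n/2\rangle$ is the greatest integer strictly less than $n/2$ and $\mathrm{GenScale}[n]=\mathrm{scale}_n[\langle n/2\rangle]$. *)

From Stdlib Require Import Reals Arith Lia.
Open Scope R_scope.

(* scale_n[k] = tan(pi/n) / tan(k pi/n); meaningful for 1 <= k < n/2
   (the statement only uses it in that range). *)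
Definition scale (n k : nat) : R :=
  tan (PI / INR n) / tan (INR k * PI / INR n).

(* <n/2> = greatest integer strictly less than n/2 = (n-1)/2 (floor), n >= 1 *)
Definition half_lt (n : nat) : nat := ((n - 1) / 2)%nat.

Definition GenScale (n : nat) : R := scale n (half_lt n).

From Stdlib Require Import Reals Lia Lra.
Open Scope R_scope.

(* With [N = 2 M], the angle [k pi / M] is [2k pi / N], so [scale_M[k]] and
   [scale_N[2k]] share their denominator and differ by the constant factor
   [tan (pi/M) / tan (pi/N)]; as GenScale is a special case, this factor is
   exactly [GenScale[M] / GenScale[N]].  For the second claim, [M = 2m + 1]
   odd means that complementary indices [j + k = M] of [scale_N] have angles
   summing to [pi/2], so [tan] turns into [cot]: both [scale_N[M - 2]] and
   [GenScale[M]] reduce to [tan (pi/N) tan (2 pi/N)]. *)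

Lemma angle_double n k : (0 < n)%nat ->
  INR (2 * k) * PI / INR (2 * n) = INR k * PI / INR n.
Proof.
  intros Hn. apply lt_0_INR in Hn.
  rewrite !mult_INR; simpl (INR 2). field. lra.
Qed.

Lemma angle_bounds n k : (1 <= k)%nat -> (2 * k < n)%nat ->
  0 < INR k * PI / INR n < PI / 2.
Proof.
  intros Hk Hkn.
  apply le_INR in Hk. apply lt_INR in Hkn. rewrite mult_INR in Hkn.
  simpl in Hk, Hkn. pose proof PI_RGT_0.
  assert (0 < INR n) by lra.
  split.
  - apply Rdiv_lt_0_compat; nra.
  - apply (Rmult_lt_reg_r (INR n)); [lra|].
    unfold Rdiv; rewrite Rmult_assoc, Rinv_l by lra. nra.
Qed.

Lemma tan_angle_gt0 n k : (1 <= k)%nat -> (2 * k < n)%nat ->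
  0 < tan (INR k * PI / INR n).
Proof. intros Hk Hkn. apply tan_gt_0; apply angle_bounds; assumption. Qed.

Lemma tan_unit_angle_gt0 n : (2 < n)%nat -> 0 < tan (PI / INR n).
Proof.
  intros Hn. rewrite <- (Rmult_1_l PI).
  apply (tan_angle_gt0 n 1); lia.
Qed.

Lemma scale_gt0 n k : (1 <= k)%nat -> (2 * k < n)%nat -> 0 < scale n k.
Proof.
  intros Hk Hkn. unfold scale.
  apply Rdiv_lt_0_compat; [apply tan_unit_angle_gt0; lia|].
  apply tan_angle_gt0; assumption.
Qed.

Lemma scale_double n k : (2 <= n)%nat ->
  scale n k = scale (2 * n) (2 * k) * (tan (PI / INR n) / tan (PI / INR (2 * n))).
Proof.
  intros Hn. unfold scale. rewrite angle_double by lia.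
  assert (tan (PI / INR (2 * n)) <> 0)
    by (pose proof (tan_unit_angle_gt0 (2 * n) ltac:(lia)); lra).
  (* No range condition on [k]: the shared denominator may vanish, so its
     inverse is kept as an opaque atom for [field]. *)
  unfold Rdiv. set (t := / tan (INR k * PI * / INR n)). field. assumption.
Qed.

Lemma tan_shift x : tan (PI / 2 - x) = / tan x.
Proof.
  unfold tan, Rdiv. rewrite sin_shift, cos_shift, Rinv_mult, Rinv_inv.
  apply Rmult_comm.
Qed.

Lemma scale_complement n j k : (0 < n)%nat -> (2 * (j + k) = n)%nat ->
  scale n j = tan (PI / INR n) * tan (INR k * PI / INR n).
Proof.
  intros Hn Hjk.
  apply lt_0_INR in Hn.
  assert (Hnr : INR n = 2 * (INR j + INR k))
    by (rewrite <- Hjk, mult_INR, plus_INR; reflexivity).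
  assert (Hangle : INR j * PI / INR n = PI / 2 - INR k * PI / INR n)
    by (rewrite Hnr in *; field; lra).
  unfold scale. rewrite Hangle, tan_shift.
  unfold Rdiv. rewrite Rinv_inv. reflexivity.
Qed.

Lemma half_lt_odd m : half_lt (2 * m + 1) = m.
Proof.
  unfold half_lt. replace (2 * m + 1 - 1)%nat with (m * 2)%nat by lia.
  apply Nat.div_mul; lia.
Qed.

Lemma half_lt_double_odd m : half_lt (2 * (2 * m + 1)) = (2 * m)%nat.
Proof.
  unfold half_lt. replace (2 * (2 * m + 1) - 1)%nat with (1 + 2 * m * 2)%nat by lia.
  rewrite Nat.div_add by lia. reflexivity.
Qed.

Lemma GenScale_ratio_odd m : (1 <= m)%nat ->
  GenScale (2 * m + 1) / GenScale (2 * (2 * m + 1))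
  = tan (PI / INR (2 * m + 1)) / tan (PI / INR (2 * (2 * m + 1))).
Proof.
  intros Hm. unfold GenScale. rewrite half_lt_odd, half_lt_double_odd.
  rewrite (scale_double (2 * m + 1) m) by lia.
  assert (0 < scale (2 * (2 * m + 1)) (2 * m)) by (apply scale_gt0; lia).
  assert (0 < tan (PI / INR (2 * (2 * m + 1)))) by (apply tan_unit_angle_gt0; lia).
  field. split; lra.
Qed.

Lemma GenScale_odd m : (1 <= m)%nat ->
  GenScale (2 * m + 1) = tan (PI / INR (2 * (2 * m + 1))) * tan (PI / INR (2 * m + 1)).
Proof.
  intros Hm. unfold GenScale. rewrite half_lt_odd.
  rewrite (scale_double (2 * m + 1) m) by lia.
  rewrite (scale_complement _ (2 * m) 1) by lia.
  rewrite Rmult_1_l.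
  assert (0 < tan (PI / INR (2 * (2 * m + 1)))) by (apply tan_unit_angle_gt0; lia).
  field. lra.
Qed.

Theorem lemma6 (N : nat) :
  (6 <= N)%nat -> (N mod 4 = 2)%nat ->
  (forall k : nat, (1 <= k)%nat -> (4 * k < N)%nat ->
     scale (N / 2) k = scale N (2 * k) * (GenScale (N / 2) / GenScale N))
  /\ scale N (N / 2 - 2) = GenScale (N / 2).
Proof.
  intros H6 Hmod.
  set (m := (N / 4)%nat).
  assert (HN : N = (2 * (2 * m + 1))%nat)
    by (pose proof (Nat.div_mod N 4 ltac:(lia)); subst m; lia).
  assert (HM : (N / 2 = 2 * m + 1)%nat)
    by (rewrite HN, Nat.mul_comm; apply Nat.div_mul; lia).
  assert (Hm : (1 <= m)%nat) by lia.
  rewrite HM. clearbody m. subst N. split.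
  - intros k _ _.
    rewrite GenScale_ratio_odd by assumption.
    apply scale_double; lia.
  - rewrite GenScale_odd by assumption.
    replace (2 * m + 1 - 2)%nat with (2 * m - 1)%nat by lia.
    rewrite (scale_complement _ (2 * m - 1) 2) by lia.
    change (INR 2) with (INR (2 * 1)).
    rewrite angle_double by lia.
    change (INR 1) with 1. rewrite Rmult_1_l. reflexivity.
Qed.
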